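(* Let $s=\tfrac12$, $\lambda\in\mathbb{C}$ and $k\in\mathbb{Z}\setminus\{0\}$. Every even superderivation of $\mathfrak{L}^{1/2}_\lambda$ of degree $k$ is inner; more precisely, it equals $\mathrm{ad}(aL_k+bI_k)$ for some $a,b\in\mathbb{C}$.
   Context: For $s\in\{0,\tfrac12\}$ and $\lambda\in\mathbb{C}$, $\mathfrak{L}^s_\lambda$ is the complex Lie superalgebra with basis $\{L_m,I_m,G_p,H_p : m\in\mathbb{Z},\ p\in s+\mathbb{Z}\}$, even part spanned by the $L_m,I_m$, odd part spanned by the $G_p,H_p$, and brackets $[L_m,L_n]=(m-n)L_{m+n}$, $[L_m,I_n]=(m-n)I_{m+n}$, $[L_m,H_p]=(\tfrac m2-p)H_{m+p}$, $[L_m,G_p]=(\tfrac m2-p)G_{m+p}+\lambda(m+1)H_{m+p}$, $[I_m,G_p]=(m-2p)H_{m+p}$, $[G_p,G_q]=I_{p+q}$, plus those given by super-antisymmetry $[y,x]=-(-1)^{|x||y|}[x,y]$; all other brackets of basis elements are zero. $\mathfrak{L}_r$ ($r\in\tfrac12\mathbb{Z}$) is spanned by basis elements of index $r$. A superderivation of parity $a$ is a linear map $D$ shifting parity by $a$ with $D([x,y])=[D(x),y]+(-1)^{a|x|}[x,D(y)]$ for homogeneous $x,y$; it has degree $r$ if $D(\mathfrak{L}_q)\subset\mathfrak{L}_{q+r}$. $\mathrm{ad}\,x(y)=[x,y]$. *)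

From HB Require Import structures.
From mathcomp Require Import all_boot all_order all_algebra.
Set Implicit Arguments. Unset Strict Implicit. Unset Printing Implicit Defensive.
Import Order.TTheory GRing.Theory Num.Theory.
Local Open Scope ring_scope.

(* Basis of L^{1/2}_lambda:  BL m = L_m, BI m = I_m (m : int),
   BG r = G_{r+1/2}, BH r = H_{r+1/2} (r : int). *)
Inductive basis := BL of int | BI of int | BG of int | BH of int.

Definition basis_eqb (x y : basis) : bool :=
  match x, y with
  | BL m, BL n | BI m, BI n | BG m, BG n | BH m, BH n => m == n
  | _, _ => false
  end.

Lemma basis_eqP : Equality.axiom basis_eqb.
Proof.
by case=> m [] n /=; (try by constructor); apply: (iffP eqP) => [->|[]].
Qed.

HB.instance Definition _ := hasDecEq.Build basis basis_eqP.

Definition parity (b : basis) : bool :=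
  match b with BL _ | BI _ => false | BG _ | BH _ => true end.

(* Twice the index (so that it is an integer). *)
Definition idx2 (b : basis) : int :=
  match b with
  | BL m | BI m => 2 * m
  | BG r | BH r => 2 * r + 1
  end.

Definition elt (R : Type) := seq (basis * R).

Definition coef (R : nmodType) (x : elt R) (c : basis) : R :=
  \sum_(t <- x | t.1 == c) t.2.

Definition scale (R : pzRingType) (a : R) (x : elt R) : elt R :=
  [seq (t.1, a * t.2) | t <- x].

Definition ext (R : pzRingType) (f : basis -> elt R) (x : elt R) : elt R :=
  flatten [seq scale t.2 (f t.1) | t <- x].

Definition half (R : fieldType) (z : int) : R := z%:~R / 2%:R.

Definition br (R : fieldType) (lam : R) (b1 b2 : basis) : elt R :=
  match b1, b2 with
  | BL m, BL n => [:: (BL (m + n), (m - n)%:~R)]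
  | BL m, BI n => [:: (BI (m + n), (m - n)%:~R)]
  | BI m, BL n => [:: (BI (m + n), - (n - m)%:~R)]
  | BL m, BH r => [:: (BH (m + r), half R (m - 2 * r - 1))]
  | BH r, BL m => [:: (BH (m + r), - half R (m - 2 * r - 1))]
  | BL m, BG r => [:: (BG (m + r), half R (m - 2 * r - 1));
                      (BH (m + r), lam * (m + 1)%:~R)]
  | BG r, BL m => [:: (BG (m + r), - half R (m - 2 * r - 1));
                      (BH (m + r), - (lam * (m + 1)%:~R))]
  | BI m, BG r => [:: (BH (m + r), (m - 2 * r - 1)%:~R)]
  | BG r, BI m => [:: (BH (m + r), - (m - 2 * r - 1)%:~R)]
  | BG r, BG q => [:: (BI (r + q + 1), 1)]
  | _, _ => [::]
  end.

Definition brE (R : fieldType) (lam : R) (x y : elt R) : elt R :=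
  flatten [seq scale (t.2 * u.2) (br lam t.1 u.1) | t <- x, u <- y].

Definition bas (R : pzRingType) (b : basis) : elt R := [:: (b, 1)].

Definition even_superder_deg (R : fieldType) (lam : R) (k : int)
    (d : basis -> elt R) : Prop :=
  [/\ (forall b c, coef (d b) c != 0 -> parity c = parity b),
      (forall b c, coef (d b) c != 0 -> idx2 c = idx2 b + 2 * k) &
      (forall b1 b2, coef (ext d (br lam b1 b2)) =1
         coef (brE lam (d b1) (bas R b2) ++ brE lam (bas R b1) (d b2)))].

From Pilot Require Import Defs.
From HB Require Import structures.
From mathcomp Require Import all_boot all_order all_algebra.
From mathcomp Require Import ring zify.
Set Implicit Arguments. Unset Strict Implicit. Unset Printing Implicit Defensive.
Import Order.TTheory GRing.Theory Num.Theory.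
Local Open Scope ring_scope.

(* By degree and parity, D L_0 = al L_k + be I_k.  Applying D to
   [L_0, x] = -(index of x) x (plus lam H_r when x = G_r) and comparing with
   [L_0, D x], where D x has index shifted by k, gives k D x = [D L_0, x] up to
   lam-terms.  These vanish: D maps H_r into the H-span, and ad of an even
   element acts on G_r and H_r with the same coefficient.  Hence
   D = ad((al/k) L_k + (be/k) I_k). *)

Section Coefficients.
Variable R : pzRingType.
Implicit Types (l : elt R) (b c : basis) (F : basis -> R).

Lemma coef_nil c : coef ([::] : elt R) c = 0.
Proof. by rewrite /coef big_nil. Qed.

Lemma coef_cons b r l c :
  coef ((b, r) :: l) c = r * (b == c)%:R + coef l c.
Proof. by rewrite /coef big_cons /=; case: eqP; rewrite ?mulr1 ?mulr0 ?add0r. Qed.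

Lemma coef_cat l1 l2 c : coef (l1 ++ l2) c = coef l1 c + coef l2 c.
Proof. by rewrite /coef big_cat. Qed.

Lemma coef_scale a l c : coef (scale a l) c = a * coef l c.
Proof. by rewrite /coef /scale big_map mulr_sumr. Qed.

Lemma coef_flatten (L : seq (elt R)) c :
  coef (flatten L) c = \sum_(l <- L) coef l c.
Proof.
elim: L => [|l L IH]; first by rewrite big_nil coef_nil.
by rewrite /= coef_cat IH big_cons.
Qed.

Lemma coef_ext f l c : coef (ext f l) c = \sum_(t <- l) t.2 * coef (f t.1) c.
Proof. by rewrite /ext coef_flatten big_map; apply: eq_bigr => t _; apply: coef_scale. Qed.

Lemma sum_coef l F (U : seq basis) : uniq U -> {subset map fst l <= U} ->
  \sum_(t <- l) t.2 * F t.1 = \sum_(b <- U) coef l b * F b.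
Proof.
move=> uU sub.
transitivity (\sum_(b <- U) \sum_(t <- l) (t.1 == b)%:R * (t.2 * F t.1)).
  rewrite exchange_big; apply: eq_big_seq => t tl /=.
  have tU : t.1 \in U by apply: sub; apply: map_f.
  rewrite (big_rem _ tU) /= eqxx mul1r big1_seq ?addr0 // => b /=.
  rewrite (mem_rem_uniq _ uU) inE => /andP[/negbTE nb _].
  by rewrite eq_sym nb mul0r.
apply: eq_bigr => b _; rewrite /coef big_distrl [RHS]big_mkcond /=.
apply: eq_bigr => t _.
by case: eqP => [->|_]; rewrite ?mul1r ?mul0r.
Qed.

Lemma sum_coef_supp2 l F b1 b2 : b1 != b2 ->
  (forall b, coef l b != 0 -> b = b1 \/ b = b2) ->
  \sum_(t <- l) t.2 * F t.1 = coef l b1 * F b1 + coef l b2 * F b2.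
Proof.
move=> b12 supp; set V := [seq b <- undup (map fst l) | (b != b1) && (b != b2)].
rewrite (@sum_coef l F (b1 :: b2 :: V)).
- rewrite !big_cons big1_seq ?addr0 ?addrA // => b /=.
  rewrite mem_filter => /andP[/andP[nb1 nb2] _].
  have [->|/supp[]/eqP] := eqVneq (coef l b) 0; first by rewrite mul0r.
  by rewrite (negbTE nb1).
  by rewrite (negbTE nb2).
- rewrite /= !inE negb_or b12 filter_uniq ?undup_uniq // andbT.
  by rewrite !mem_filter !eqxx /= andbF.
- move=> b bl; rewrite !inE mem_filter mem_undup bl andbT.
  by case: (b == b1); case: (b == b2).
Qed.

End Coefficients.

Section Bracket.
Variables (R : fieldType) (lam : R).
Implicit Types (l : elt R) (b c x y : basis).

Lemma coef_brE l1 l2 c : coef (brE lam l1 l2) c =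
  \sum_(t <- l1) \sum_(u <- l2) t.2 * u.2 * coef (br lam t.1 u.1) c.
Proof.
elim: l1 => [|t l1 IH]; first by rewrite big_nil /brE /= coef_nil.
rewrite big_cons -IH /brE /= flatten_cat coef_cat coef_flatten big_map.
by congr (_ + _); apply: eq_bigr => u _; apply: coef_scale.
Qed.

Lemma coef_brE_basr l x c :
  coef (brE lam l (bas R x)) c = \sum_(t <- l) t.2 * coef (br lam t.1 x) c.
Proof.
by rewrite coef_brE; apply: eq_bigr => t _; rewrite big_cons big_nil addr0 mulr1.
Qed.

Lemma coef_brE_basl l x c :
  coef (brE lam (bas R x) l) c = \sum_(u <- l) u.2 * coef (br lam x u.1) c.
Proof.
by rewrite coef_brE big_cons big_nil addr0; apply: eq_bigr => u _; rewrite mul1r.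
Qed.

Lemma coef_br_even_BH_BG y r s : ~~ parity y -> coef (br lam y (BH r)) (BG s) = 0.
Proof. by case: y => // m _; rewrite /= ?coef_cons coef_nil ?mulr0 ?addr0. Qed.

Lemma coef_br_even_BG_BG y r s : ~~ parity y ->
  coef (br lam y (BG r)) (BG s) = coef (br lam y (BH r)) (BH s).
Proof. by case: y => // m _; rewrite /= !coef_cons !coef_nil /= !mulr0 !addr0. Qed.

Definition weight b : R := - Defs.half R (idx2 b).

Definition br_L0_rest b : elt R := if b is BG r then [:: (BH r, lam)] else [::].

Hypothesis two_neq0 : 2%:R != 0 :> R.

Lemma br_L0 b : br lam (BL 0) b = (b, weight b) :: br_L0_rest b.
Proof.
have half2 (m : int) : (2 * m)%:~R / 2 = m%:~R :> R.
  by rewrite intrM mulrC mulKf.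
rewrite /weight /Defs.half; case: b => m /=; rewrite add0r ?mulr1.
1,2: by rewrite half2 sub0r rmorphN.
1,2: by rewrite /Defs.half sub0r -opprD rmorphN mulNr.
Qed.

Lemma coef_ext_br_L0 (f : basis -> elt R) x c :
  coef (ext f (br lam (BL 0) x)) c =
  weight x * coef (f x) c + (if x is BG r then lam * coef (f (BH r)) c else 0).
Proof.
by rewrite br_L0 coef_ext big_cons; case: x => m /=; rewrite ?big_cons big_nil ?addr0.
Qed.

Lemma coef_brE_L0 (y : elt R) c : coef (brE lam (bas R (BL 0)) y) c =
  weight c * coef y c + (if c is BH s then lam * coef y (BG s) else 0).
Proof.
rewrite coef_brE_basl.
under eq_bigr => u _ do rewrite br_L0 coef_cons mulrDr.
rewrite big_split /=; congr (_ + _).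
  rewrite /coef mulr_sumr [RHS]big_mkcond; apply: eq_bigr => u _.
  by case: eqP => [->|_]; rewrite ?mulr1 ?mulr0 // mulrC.
case: c => [m|m|m|s].
1-3: by rewrite big1 // => -[[] n r] _; rewrite /= ?coef_cons coef_nil /= ?mulr0 ?addr0 ?mulr0.
rewrite /coef mulr_sumr [RHS]big_mkcond; apply: eq_bigr => -[[] n r] _ /=;
  rewrite ?big_cons big_nil ?mulr0 //=.
by rewrite ![_ == _]/eq_op /=; case: eqP; rewrite ?addr0 ?mulr0 // mulrC.
Qed.
End Bracket.

Definition shiftLG (k : int) (x : basis) : basis :=
  match x with BL m | BI m => BL (k + m) | BG r | BH r => BG (k + r) end.
Definition shiftIH (k : int) (x : basis) : basis :=
  match x with BL m | BI m => BI (k + m) | BG r | BH r => BH (k + r) end.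

Section EvenSuperderivation.
Variables (R : numFieldType) (lam : R) (k : int) (d : basis -> elt R).
Hypotheses (k_neq0 : k != 0) (dD : even_superder_deg lam k d).

Let two_neq0 : 2%:R != 0 :> R. Proof. by rewrite pnatr_eq0. Qed.
Let kR_neq0 : k%:~R != 0 :> R. Proof. by rewrite intr_eq0. Qed.

Lemma coef_d_parity x c : coef (d x) c != 0 -> parity c = parity x.
Proof. by case: dD => + _ _; apply. Qed.

Lemma coef_d_supp x c : coef (d x) c != 0 -> c = shiftLG k x \/ c = shiftIH k x.
Proof.
case: dD => hpar hidx _ nz; move: (hpar _ _ nz) (hidx _ _ nz).
by case: x {nz} => m; case: c => n //= _ e; (left + right); congr (_ _); lia.
Qed.

Lemma weight_coef_d x c : weight R c * coef (d x) c = (weight R x - k%:~R) * coef (d x) c.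
Proof.
have [->|nz] := eqVneq (coef (d x) c) 0; first by rewrite !mulr0.
case: dD => _ /(_ _ _ nz) e _; congr (_ * _).
by rewrite /weight e /Defs.half intrD intrM mulrDl mulrAC divff // mul1r opprD.
Qed.

Let al := coef (d (BL 0)) (BL k).
Let be := coef (d (BL 0)) (BI k).

Lemma coef_brE_d_L0 x c : coef (brE lam (d (BL 0)) (bas R x)) c =
  al * coef (br lam (BL k) x) c + be * coef (br lam (BI k) x) c.
Proof.
have supp c' : coef (d (BL 0)) c' != 0 -> c' = BL k \/ c' = BI k.
  by move/coef_d_supp; rewrite /= addr0.
by rewrite coef_brE_basr (sum_coef_supp2 (fun b => coef (br lam b x) c) _ supp).
Qed.

Definition ad_inner : elt R := [:: (BL k, al / k%:~R); (BI k, be / k%:~R)].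

Lemma coef_brE_ad_inner x c : coef (brE lam ad_inner (bas R x)) c =
  (al * coef (br lam (BL k) x) c + be * coef (br lam (BI k) x) c) / k%:~R.
Proof. by rewrite coef_brE_basr !big_cons big_nil addr0 /=; field. Qed.

(* D [L_0, x] = [D L_0, x] + [L_0, D x], where ad L_0 acts on the weight space
   of D x by weight x - k: solving for D x leaves only the two lam-terms. *)
Lemma coef_d_correction x c : coef (d x) c = coef (brE lam ad_inner (bas R x)) c +
  ((if c is BH s then lam * coef (d x) (BG s) else 0)
   - (if x is BG r then lam * coef (d (BH r)) c else 0)) / k%:~R.
Proof.
case: dD => _ _ /(_ (BL 0) x c).
rewrite coef_ext_br_L0 // coef_cat coef_brE_d_L0 coef_brE_L0 // weight_coef_d.
rewrite coef_brE_ad_inner.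
set X := (if x is BG r then _ else _); set Y := (if c is BH s then _ else _) => E.
apply: (mulfI kR_neq0).
transitivity (weight R x * coef (d x) c + X - ((weight R x - k%:~R) * coef (d x) c + Y)
  + Y - X); first by ring.
by rewrite E; field.
Qed.

Lemma coef_d_parity_neq x c : parity c != parity x -> coef (d x) c = 0.
Proof. by apply: contraTeq => /coef_d_parity ->; rewrite eqxx. Qed.

Lemma coef_d_balanced x c :
  (if c is BH s then lam * coef (d x) (BG s) else 0) =
  (if x is BG r then lam * coef (d (BH r)) c else 0) ->
  coef (d x) c = coef (brE lam ad_inner (bas R x)) c.
Proof. by move=> e; rewrite coef_d_correction e subrr mul0r addr0. Qed.

Lemma coef_d_even x c : ~~ parity x ->
  coef (d x) c = coef (brE lam ad_inner (bas R x)) c.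
Proof.
move=> px; apply: coef_d_balanced; case: x px => // m _; case: c => //= s;
  by rewrite coef_d_parity_neq ?mulr0.
Qed.

Lemma coef_d_BH_BG r s : coef (d (BH r)) (BG s) = 0.
Proof.
rewrite coef_d_balanced // coef_brE_basr !big_cons big_nil.
by rewrite !coef_br_even_BH_BG // !mulr0 !addr0.
Qed.

Lemma coef_d_BH r c : coef (d (BH r)) c = coef (brE lam ad_inner (bas R (BH r))) c.
Proof. by apply: coef_d_balanced; case: c => //= s; rewrite coef_d_BH_BG mulr0. Qed.

Lemma coef_d_BG r c : coef (d (BG r)) c = coef (brE lam ad_inner (bas R (BG r))) c.
Proof.
have GG s : coef (d (BG r)) (BG s) = coef (brE lam ad_inner (bas R (BG r))) (BG s).
  by apply: coef_d_balanced; rewrite coef_d_BH_BG mulr0.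
apply: coef_d_balanced; case: c => [n|n|s|s] /=.
- by rewrite coef_d_parity_neq ?mulr0.
- by rewrite coef_d_parity_neq ?mulr0.
- by rewrite coef_d_BH_BG mulr0.
rewrite GG coef_d_BH !coef_brE_basr !big_cons !big_nil.
by rewrite !coef_br_even_BG_BG.
Qed.

Lemma coef_d x c : coef (d x) c = coef (brE lam ad_inner (bas R x)) c.
Proof.
by case: x => m; [exact: coef_d_even | exact: coef_d_even | exact: coef_d_BG
  | exact: coef_d_BH].
Qed.

End EvenSuperderivation.

Theorem lemma2p6 (R : numClosedFieldType) (lam : R) (k : int) (d : basis -> elt R) :
  k != 0 -> even_superder_deg lam k d ->
  exists a b : R, forall x : basis,
    coef (d x) =1 coef (brE lam [:: (BL k, a); (BI k, b)] (bas R x)).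
Proof.
move=> k_neq0 dD.
by exists (coef (d (BL 0)) (BL k) / k%:~R), (coef (d (BL 0)) (BI k) / k%:~R);
  apply: coef_d.
Qed.
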